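(* Let $X$ be a standard one-dimensional Brownian motion starting at $0$, $p$ the atomic proposition with $X(\omega),t\models_n p$ iff $X_t(\omega)\geq1$, and $\phi_1:=\Box_{(1,2)}(\Diamond_{(1,4)}p\wedge\lnot\Diamond_{(1,3)}p)$. Let $n\geq2$, $\tau^{(n)}_p(\omega):=\inf\{t\in\mathbb{N}/n : X(\omega),t\models_n p\}$, and suppose $\tau^{(n)}_p(\omega)\geq6$. Then $X(\omega),t\not\models_n\phi_1$ for $t=0,1/n,\dots,\tau^{(n)}_p(\omega)-5-1/n$; $X(\omega),t\models_n\phi_1$ for $t=\tau^{(n)}_p(\omega)-5,\ \tau^{(n)}_p(\omega)-5+1/n$; $X(\omega),t\not\models_n\phi_1$ for $t=\tau^{(n)}_p(\omega)-5+2/n,\dots,\tau^{(n)}_p(\omega)-2-2/n$.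
   Context: $\mathbb{N}/n:=\{k/n : k\in\mathbb{N}\}$. Discrete semantics at $t\in\mathbb{N}/n$: $\lnot,\wedge$ classical; $X(\omega),t\models_n\Diamond_I\phi$ iff $\exists s\in I\cap\mathbb{N}/n$ with $X(\omega),t+s\models_n\phi$; $X(\omega),t\models_n\Box_I\phi$ iff $\forall s\in I\cap\mathbb{N}/n$, $X(\omega),t+s\models_n\phi$. *)

From HB Require Import structures.
From mathcomp Require Import all_boot all_order all_algebra.
From mathcomp Require Import all_classical all_reals all_analysis.
Set Implicit Arguments. Unset Strict Implicit. Unset Printing Implicit Defensive.
Import Order.TTheory GRing.Theory Num.Theory.
Import numFieldNormedType.Exports.
Local Open Scope classical_set_scope.
Local Open Scope ring_scope.

Definition std_brownian_motion {d} {T : measurableType d} {R : realType}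
    (P : probability T R) (X : R -> T -> R) : Prop :=
  [/\ (forall t, 0 <= t -> measurable_fun setT (X t)),
      (forall w, X 0 w = 0),
      (forall w, {within `[0, +oo[, continuous (fun t => X t w)}),
      (forall s t, 0 <= s -> s < t -> forall B : set R, measurable B ->
         P ((fun w => X t w - X s w) @^-1` B) = normal_prob 0 (Num.sqrt (t - s)) B) &
      (forall (m : nat) (ts : nat -> R), 0 <= ts 0%N -> (forall i, ts i < ts i.+1) ->
       forall B : nat -> set R, (forall i, measurable (B i)) ->
       let A i := (fun w => X (ts i.+1) w - X (ts i) w) @^-1` B i in
       P (\bigcap_(i in `I_m) A i) = (\prod_(i < m) P (A i))%E)].

Inductive formula (R : realType) : Type :=
  | FAtom of (R -> Prop)
  | FNot of formula R
  | FAnd of formula R & formula R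
  | FDia of interval R & formula R
  | FBox of interval R & formula R.

Fixpoint sat_n {R : realType} (n : nat) (x : R -> R) (t : R) (phi : formula R)
    : Prop :=
  match phi with
  | FAtom p => p (x t)
  | FNot f => ~ sat_n n x t f
  | FAnd f g => sat_n n x t f /\ sat_n n x t g
  | FDia J f => exists k : nat, (k%:R / n%:R \in J) /\ sat_n n x (t + k%:R / n%:R) f
  | FBox J f => forall k : nat, (k%:R / n%:R \in J) -> sat_n n x (t + k%:R / n%:R) f
  end.

Definition atom_p {R : realType} : formula R := FAtom (fun v : R => 1 <= v).

Definition phi1 {R : realType} : formula R :=
  FBox `]1, 2[%R (FAnd (FDia `]1, 4[%R atom_p) (FNot (FDia `]1, 3[%R atom_p))).

Definition tau_n {R : realType} (n : nat) (x : R -> R) : R :=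
  inf [set t : R | exists k : nat, t = k%:R / n%:R /\ sat_n n x t atom_p].

(** Only the path [x := X^~ w] matters.  At grid index [t], [phi1] asks, for
    every [k] in [(n, 2n)], for a hit of [{x >= 1}] at an index in
    [(t+k+n, t+k+4n)] and for none in [(t+k+n, t+k+3n)].  Let [K] be the first
    hit, so that [tau = K/n].  If [t + 5n < K], then [k = n+1] leaves no room
    for a hit in the first window.  If [t + 5n] is [K] or [K+1], then [K] lies
    in every first window and every forbidden window lies before [K].  If
    [K+2 <= t+5n] and [t+2n+2 <= K], then some [k] in [(n, 2n)] (here [n >= 2]
    is needed) puts [K] itself into the forbidden window. *)

From HB Require Import structures.
From mathcomp Require Import all_boot all_order all_algebra.
From mathcomp Require Import all_classical all_reals all_analysis.
From mathcomp Require Import zify.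
Set Implicit Arguments. Unset Strict Implicit. Unset Printing Implicit Defensive.
Import Order.TTheory GRing.Theory Num.Theory.
Local Open Scope classical_set_scope.
Local Open Scope ring_scope.

Lemma inf_lbound_mem (R : realType) (E : set R) (x : R) :
  E x -> lbound E x -> inf E = x.
Proof.
move=> Ex lbx; apply/eqP; rewrite eq_le lb_le_inf ?andbT //; last by exists x.
by apply: ge_inf => //; exists x.
Qed.

Definition grid {R : numFieldType} (n k : nat) : R := k%:R / n%:R.

Section Grid.
Variables (R : numFieldType) (n : nat).
Hypothesis n_gt0 : (0 < n)%N.

Let invn_gt0 : n%:R^-1 > 0 :> R. Proof. by rewrite invr_gt0 ltr0n. Qed.

Lemma grid_le a b : (grid n a <= grid n b :> R) = (a <= b)%N.
Proof. by rewrite ler_pM2r // ler_nat. Qed.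

Lemma grid_lt a b : (grid n a < grid n b :> R) = (a < b)%N.
Proof. by rewrite ltr_pM2r // ltr_nat. Qed.

Lemma gridD a b : grid n a + grid n b = grid n (a + b) :> R.
Proof. by rewrite /grid natrD mulrDl. Qed.

Lemma gridB a b : (b <= a)%N -> grid n a - grid n b = grid n (a - b) :> R.
Proof. by move=> ba; rewrite /grid natrB // mulrBl. Qed.

Lemma grid_natM c : c%:R = grid n (c * n) :> R.
Proof. by rewrite /grid natrM mulfK // pnatr_eq0 -lt0n. Qed.

Lemma grid_in_itv a b k :
  (grid n k \in (`]a%:R, b%:R[ : interval R)) = (a * n < k < b * n)%N.
Proof. by rewrite in_itv /= !grid_natM !grid_lt. Qed.

End Grid.

Definition phi1_grid (n : nat) (hit : nat -> Prop) (t : nat) : Prop :=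
  forall k, (n < k < 2 * n)%N ->
    (exists2 j, (n < j < 4 * n)%N & hit (t + k + j)%N) /\
    ~ exists2 j, (n < j < 3 * n)%N & hit (t + k + j)%N.

Section GridSemantics.
Variables (R : realType) (n : nat) (x : R -> R).
Hypothesis n_gt0 : (0 < n)%N.

Lemma sat_dia_grid a b t (f : formula R) :
  sat_n n x (grid n t) (FDia `]a%:R, b%:R[ f) <->
  exists2 j, (a * n < j < b * n)%N & sat_n n x (grid n (t + j)) f.
Proof.
split=> [[j [Jj fj]]|[j Jj fj]]; exists j.
- by move: Jj; rewrite -[_ / _]/(grid n j) grid_in_itv.
- by rewrite -gridD.
- by split; rewrite ?gridD // -[_ / _]/(grid n j) grid_in_itv.
Qed.

Lemma sat_box_grid a b t (f : formula R) :
  sat_n n x (grid n t) (FBox `]a%:R, b%:R[ f) <->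
  forall k, (a * n < k < b * n)%N -> sat_n n x (grid n (t + k)) f.
Proof.
split=> fJ k Jk.
- by rewrite -gridD; apply: fJ; rewrite -[_ / _]/(grid n k) grid_in_itv.
- by rewrite gridD; apply: fJ; rewrite -[_ / _]/(grid n k) grid_in_itv in Jk.
Qed.

Lemma sat_phi1_grid t :
  sat_n n x (grid n t) phi1 <-> phi1_grid n (fun m => 1 <= x (grid n m)) t.
Proof.
rewrite (sat_box_grid 1 2); split=> phi1k k Jk.
- have := phi1k k; rewrite mul1n => /(_ Jk).
  case=> /(sat_dia_grid 1 4 _ atom_p) [j Jj hit] nohit.
  split; first by exists j; rewrite // mul1n in Jj.
  move=> [j' Jj' hit']; apply/nohit/(sat_dia_grid 1 3 _ atom_p).
  by exists j'; rewrite ?mul1n.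
- rewrite mul1n in Jk; have [[j Jj hit] nohit] := phi1k k Jk.
  split; first by apply/(sat_dia_grid 1 4 _ atom_p); exists j; rewrite ?mul1n.
  move=> /(sat_dia_grid 1 3 _ atom_p) [j' Jj' hit']; apply: nohit.
  by exists j'; rewrite // mul1n in Jj'.
Qed.

End GridSemantics.

Section FirstHit.
Variables (n K : nat) (hit : nat -> Prop).
Hypothesis no_hit_before_K : forall m, (m < K)%N -> ~ hit m.

Lemma not_phi1_grid_early t : (1 < n)%N -> (t + 5 * n < K)%N -> ~ phi1_grid n hit t.
Proof.
move=> n_gt1 tK /(_ n.+1) [|[j Jj hit_j] _]; first lia.
by move: hit_j; apply: no_hit_before_K; lia.
Qed.

Lemma phi1_grid_first_hit t :
  hit K -> (K <= t + 5 * n <= K.+1)%N -> phi1_grid n hit t.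
Proof.
move=> hit_K tK k Jk; split.
- exists (K - t - k)%N; first lia.
  by rewrite (_ : t + k + (K - t - k) = K)%N //; lia.
- by move=> [j Jj /no_hit_before_K]; apply; lia.
Qed.

End FirstHit.

Lemma not_phi1_grid_late (n K : nat) (hit : nat -> Prop) (t : nat) :
  hit K -> (1 < n)%N -> (K.+2 <= t + 5 * n)%N -> (t + 2 * n + 2 <= K)%N ->
  ~ phi1_grid n hit t.
Proof.
move=> hit_K n_gt1 Kt tK.
have [k Jk K_forbidden] :
    exists2 k, (n < k < 2 * n)%N & (t + k + n < K < t + k + 3 * n)%N.
  by exists (maxn n.+1 (K - t - 3 * n + 1)); lia.
move=> /(_ k Jk) [_]; apply.
exists (K - t - k)%N; first lia.
by rewrite (_ : t + k + (K - t - k) = K)%N //; lia.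
Qed.

Lemma tau_n_first_hit (R : realType) (n : nat) (x : R -> R) :
  (0 < n)%N -> 0 < tau_n n x ->
  exists K, [/\ tau_n n x = grid n K, 1 <= x (grid n K) &
                forall m, (m < K)%N -> ~ 1 <= x (grid n m)].
Proof.
move=> n_gt0 tau_gt0.
have [m hit_m] : exists m, 1 <= x (grid n m).
  (* [inf set0 = 0], so a positive [tau_n] rules out a path that never hits. *)
  apply: contrapT => no_hit; move: tau_gt0; rewrite /tau_n.
  rewrite (_ : [set t | _] = set0) ?inf0 ?ltxx //.
  by apply/seteqP; split => // t [k [-> hit]]; apply: no_hit; exists k.
have exK : exists K, `[< 1 <= x (grid n K) >] by exists m; apply/asboolP.
case: (ex_minnP exK) => K /asboolP hitK minK.
exists K; split => // [|k ltkK /asboolP/minK]; last by rewrite leqNgt ltkK.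
apply: inf_lbound_mem; first by exists K.
by move=> _ [k [-> /asboolP/minK]]; rewrite -[_ / _]/(grid n k) grid_le.
Qed.

Theorem lemma5p4 (d : measure_display) (T : measurableType d) (R : realType)
    (P : probability T R) (X : R -> T -> R) (n : nat) (w : T) :
  std_brownian_motion P X ->
  (2 <= n)%N ->
  6 <= tau_n n (fun t => X t w) ->
  let tau := tau_n n (fun t => X t w) in
  [/\ (forall k : nat, k%:R / n%:R <= tau - 5 - 1 / n%:R ->
         ~ sat_n n (fun t => X t w) (k%:R / n%:R) phi1),
      sat_n n (fun t => X t w) (tau - 5) phi1,
      sat_n n (fun t => X t w) (tau - 5 + 1 / n%:R) phi1 &
      (forall k : nat, tau - 5 + 2 / n%:R <= k%:R / n%:R <= tau - 2 - 2 / n%:R ->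
         ~ sat_n n (fun t => X t w) (k%:R / n%:R) phi1)].
Proof.
move=> _ n_ge2 tau_ge6 tau.
have n_gt0 : (0 < n)%N by apply: ltnW.
have [K [tauE hitK no_hit]] :=
  tau_n_first_hit n_gt0 (lt_le_trans (ltr0n _ 6) tau_ge6).
have K_ge : (6 * n <= K)%N.
  by rewrite -(grid_le R n_gt0) -(grid_natM R n_gt0) -tauE.
rewrite /tau tauE -[1 / _]/(grid n 1) -[2 / _]/(grid n 2).
rewrite (grid_natM R n_gt0 5) (grid_natM R n_gt0 2) !gridB ?gridD; [|lia..].
split.
- move=> k; rewrite -[_ / _]/(grid n k) grid_le // => kK.
  move=> /(sat_phi1_grid _ n_gt0).
  by apply: (not_phi1_grid_early no_hit); lia.
- by apply/(sat_phi1_grid _ n_gt0)/(phi1_grid_first_hit no_hit hitK); lia.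
- by apply/(sat_phi1_grid _ n_gt0)/(phi1_grid_first_hit no_hit hitK); lia.
- move=> k; rewrite -[_ / _]/(grid n k) !grid_le // => /andP [Kk kK].
  move=> /(sat_phi1_grid _ n_gt0).
  by apply: (not_phi1_grid_late (K := K)) => //; lia.
Qed.
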